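(* Let $n$ be a positive integer and $1\le k\le c\le \frac n2$. For every $(k,k)$-legal diagram $\nu$ (a partition with exactly $k$ parts), the Schur polynomial $S_\nu$ is a linear combination, with integer coefficients, of Schur polynomials $S_{\lambda/\mu}$ of $(k,c)$-legal diagrams $\lambda/\mu$.
   Context: Here $h_d$ ($d\ge0$) denotes the complete homogeneous symmetric polynomial of degree $d$ in $n$ variables (so $h_0=1$ and $h_1,\ldots,h_n$ are algebraically independent), and $h_d=0$ for $d<0$. For $1\le c\le n$, $A_c$ is the $(n-c+1)\times c$ matrix whose entry in row $i$, column $j$ is $h_{n-c+1-i+j}$. For a partition $\lambda$ with exactly $k$ parts and a partition $\mu$ with $\mu_i\le\lambda_i$ and $\mu_k=0$, $S_{\lambda/\mu}=\det(h_{\lambda_i-\mu_j-i+j})_{1\le i,j\le k}$ (with $S_\nu=S_{\nu/0}$), and the diagram $\lambda/\mu$ is $(k,c)$-legal if $S_{\lambda/\mu}$ equals some $k\times k$ minor of $A_c$. *)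

From HB Require Import structures.
From mathcomp Require Import all_boot all_order all_algebra.
From mathcomp Require Import mpoly.
Set Implicit Arguments. Unset Strict Implicit. Unset Printing Implicit Defensive.
Import Order.TTheory GRing.Theory Num.Theory.
Local Open Scope ring_scope.

Notation Poly n := {mpoly int[n]}.

Definition hcomp (n d : nat) : Poly n :=
  \sum_(m : 'X_{1..n < d.+1} | mdeg m == d) 'X_[m].

Definition hz (n : nat) (d : int) : Poly n :=
  match d with Posz d' => hcomp n d' | Negz _ => 0 end.

(* lambda is a partition with exactly k (positive) parts, lambda_1 >= ... >= lambda_k > 0;
   parts are indexed 0..k-1 via nth 0. *)
Definition partk (k : nat) (lam : seq nat) : bool :=
  [&& size lam == k, sorted geq lam & all (fun x => 0 < x)%N lam].

Definition inner_ok (k : nat) (lam mu : seq nat) : bool :=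
  [&& size mu == k, sorted geq mu,
      [forall i : 'I_k, nth 0%N mu i <= nth 0%N lam i]%N
    & nth 0%N mu k.-1 == 0%N].

Definition skewS (n k : nat) (lam mu : seq nat) : Poly n :=
  \det (\matrix_(i < k, j < k)
          hz n ((nth 0%N lam i)%:Z - (nth 0%N mu j)%:Z - (i : nat)%:Z + (j : nat)%:Z)).

(* A_c : the (n-c+1) x c matrix with (i,j) entry h_{n-c+1-i+j} (1-indexed;
   the same formula holds for 0-indexed i, j). *)
Definition Amat (n c : nat) : 'M[Poly n]_((n - c).+1, c) :=
  \matrix_(i < (n - c).+1, j < c)
     hz n ((n - c).+1%:Z - (i : nat)%:Z + (j : nat)%:Z).

Definition is_minor (R : comNzRingType) (p q k : nat) (A : 'M[R]_(p, q)) (x : R) : Prop :=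
  exists (r : 'I_k -> 'I_p) (s : 'I_k -> 'I_q),
    [/\ (forall i j : 'I_k, (i < j)%N -> (r i < r j)%N),
        (forall i j : 'I_k, (i < j)%N -> (s i < s j)%N)
      & x = \det (\matrix_(i < k, j < k) A (r i) (s j))].

Definition legal (n k c : nat) (lam mu : seq nat) : Prop :=
  [/\ partk k lam, inner_ok k lam mu & is_minor k (Amat n c) (skewS n k lam mu)].

From HB Require Import structures.
From mathcomp Require Import all_boot all_order all_algebra.
From mathcomp Require Import mpoly.
From mathcomp Require Import perm zify.
Set Implicit Arguments. Unset Strict Implicit. Unset Printing Implicit Defensive.
Import GRing.Theory.
Local Open Scope ring_scope.

(* A k x k minor of A_c is a determinant H(R, S) = det (h_{R_i + S_j + 1}) with
   row labels R_i <= n - c and column labels S_j <= c - 1; conversely, once its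
   labels are sorted, any such H(R, S) with distinct labels is, up to sign, the
   skew Schur polynomial of a (k, c)-legal diagram.  It therefore suffices to
   show that the integer span V(A, B) of the H(R, S) with labels bounded by A
   and B satisfies V(A + 1, B) <= V(A, B + 1) whenever k <= A + 1, and to walk
   from V(n - k, k - 1) to V(n - c, c - 1).
   Since h_{(R_i + 1) + S_j + 1} = h_{R_i + (S_j + 1) + 1}, raising the labels
   of m rows, summed over all m-sets of rows, gives the same as raising the
   labels of m columns, summed over all m-sets of columns.  If some R_i = A + 1,
   pick a value T <= A missed by R (there is one as k <= A + 1) and apply this
   to R lowered by one above T, with m the number of lowered rows: H(R, S) is
   the column-raised sum, which lies in V(A, B + 1), minus row-raised terms
   whose labels have a smaller sum of squares. *)

Lemma sum_det_mix_rows_cols (R : comNzRingType) k (M N : 'M[R]_k) m :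
  \sum_(I : {set 'I_k} | #|I| == m)
     \det (\matrix_(i, j) if i \in I then N i j else M i j)
  = \sum_(J : {set 'I_k} | #|J| == m)
     \det (\matrix_(i, j) if j \in J then N i j else M i j).
Proof.
rewrite /determinant (exchange_big_dep xpredT) //= [RHS](exchange_big_dep xpredT) //=.
apply: eq_bigr => s _.
rewrite [RHS](reindex_inj (imset_inj (@perm_inj _ s))) /=.
apply: eq_big => [I | I _]; first by rewrite card_imset //; exact: perm_inj.
congr (_ * _); apply: eq_bigr => i _; rewrite !mxE mem_imset //; exact: perm_inj.
Qed.

Lemma sum_nat_mem_card (T : finType) (X : {set T}) : (\sum_i ((i \in X) : nat))%N = #|X|.
Proof. by rewrite -sum1_card [RHS]big_mkcond; apply: eq_bigr => i _; case: (i \in X). Qed.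

Lemma exists_missed_value k A (R : 'I_k -> nat) i0 :
  (k <= A.+1)%N -> R i0 = A.+1 -> exists2 T, (T <= A)%N & forall i, R i != T.
Proof.
move=> le_kA Ri0.
have [/existsP [T /forallP missT] | ] := boolP [exists T : 'I_A.+1, [forall i, R i != T]].
  by exists T; first exact: ltn_ord T.
rewrite negb_exists => /forallP hitT.
have covered : [set: 'I_A.+1] \subset [set (inord (R i) : 'I_A.+1) | i in ~: [set i0]].
  apply/subsetP => T _; move: (hitT T); rewrite negb_forall => /existsP [i /negPn /eqP RiT].
  apply/imsetP; exists i; last by apply/val_inj; rewrite /= inordK RiT.
  by rewrite !inE; apply: contraTneq (ltn_ord T) => ii0; rewrite -RiT ii0 Ri0 ltnn.
have := leq_trans (subset_leq_card covered) (leq_imset_card _ _).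
by rewrite cardsT cardsC1 !card_ord; have := ltn_ord i0; lia.
Qed.

Lemma sum_sq_lower_raise_lt k (R : 'I_k -> nat) (T : nat) (b I : {set 'I_k}) :
  (forall i, R i != T) -> b = [set i | T < R i]%N -> #|I| = #|b| -> I != b ->
  (\sum_i (R i - (i \in b) + (i \in I)) ^ 2 < \sum_i R i ^ 2)%N.
Proof.
move=> missT bE cardI neq_Ib.
(* a lowered row loses at least 2T + 1, a raised row gains at most 2T - 1 *)
have per_row i : ((R i - (i \in b) + (i \in I)) ^ 2 + (2 * T + 1) * (i \in b :\: I)
                  <= R i ^ 2 + (2 * T - 1) * (i \in I :\: b))%N.
  have := missT i; rewrite !inE bE !inE.
  by case: (ltnP T (R i)) => ?; case: (i \in I) => /=; nia.
have : (\sum_i ((R i - (i \in b) + (i \in I)) ^ 2 + (2 * T + 1) * (i \in b :\: I))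
        <= \sum_i (R i ^ 2 + (2 * T - 1) * (i \in I :\: b)))%N.
  by apply: leq_sum => i _; apply: per_row.
rewrite !big_split /= -!big_distrr /= !sum_nat_mem_card.
have card_diff : #|b :\: I| = #|I :\: b|.
  by have := cardsID I b; have := cardsID b I; rewrite setIC; lia.
have diff_gt0 : (0 < #|I :\: b|)%N.
  rewrite -card_diff lt0n; apply: contra neq_Ib => /eqP/cards0_eq/eqP.
  by rewrite setD_eq0 eq_sym eqEcard cardI leqnn andbT.
have T_gt0 : (0 < T)%N.
  have /card_gt0P [i] := diff_gt0; rewrite bE !inE => /andP [Ri_le _].
  by have := missT i; move: Ri_le; lia.
have : ((2 * T - 1) * #|I :\: b| < (2 * T + 1) * #|I :\: b|)%N.
  by rewrite ltn_mul2r diff_gt0 /=; lia.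
by rewrite card_diff; set d := #|I :\: b|; lia.
Qed.

Lemma sorting_perm k (f : 'I_k -> nat) : injective f ->
  exists s : 'S_k, forall a b : 'I_k, (a < b)%N -> (f (s a) < f (s b))%N.
Proof.
move=> inj_f.
have rank_lt i : (#|[set j | f j < f i]| < k)%N.
  rewrite -[k in (_ < k)%N]card_ord; apply: proper_card; apply/properP.
  by split; [apply/subsetP | exists i; rewrite ?inE ?ltnn].
pose rank i := Ordinal (rank_lt i).
have rank_mono i j : (f i < f j)%N -> (rank i < rank j)%N.
  move=> lt_ij; apply: proper_card; apply/properP; split.
    by apply/subsetP => x; rewrite !inE => /ltn_trans; apply.
  by exists i; rewrite !inE ?lt_ij ?ltnn.
have inj_rank : injective rank.
  move=> i j eq_ij; apply: inj_f.
  by case: (ltngtP (f i) (f j)) => // /rank_mono; rewrite eq_ij ltnn.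
exists (perm inj_rank)^-1%g => a b lt_ab.
have rankK x : rank ((perm inj_rank)^-1%g x) = x by rewrite -[rank _]permE permKV.
case: ltngtP => // [/rank_mono | /inj_f eq_ab]; first by rewrite !rankK ltnNge (ltnW lt_ab).
by move: lt_ab; rewrite -(rankK a) -(rankK b) eq_ab ltnn.
Qed.

Lemma increasing_ord_gap k (f : 'I_k -> nat) :
  (forall a b : 'I_k, (a < b)%N -> (f a < f b)%N) ->
  forall a b : 'I_k, (a <= b)%N -> (f a + (b - a) <= f b)%N.
Proof.
move=> f_incr a [b lt_bk] /=; elim: b lt_bk => [|b IH] lt_bk.
  by rewrite leqn0 => /eqP a0; rewrite (_ : a = Ordinal lt_bk) ?subnn ?addn0 //; apply: val_inj.
rewrite leq_eqVlt ltnS => /predU1P [ab | le_ab].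
  by rewrite (_ : a = Ordinal lt_bk) ?subnn ?addn0 //; apply: val_inj.
have := IH (ltnW lt_bk) le_ab; have := @f_incr (Ordinal (ltnW lt_bk)) (Ordinal lt_bk) (ltnSn b).
by rewrite /=; lia.
Qed.

Lemma sorted_geq_nth_ord k (s : seq nat) (f : 'I_k.+1 -> nat) :
  size s = k.+1 -> (forall i : 'I_k.+1, nth 0%N s i = f i) ->
  (forall a b : 'I_k.+1, b = a.+1 :> nat -> f b <= f a)%N -> sorted geq s.
Proof.
move=> size_s nth_s f_noninc; apply/(sortedP 0%N) => i; rewrite size_s ltnS => lt_ik.
have := nth_s (inord i); have := nth_s (inord i.+1); rewrite !inordK ?(leqW lt_ik) // => -> ->.
by apply: f_noninc; rewrite /= !inordK ?(leqW lt_ik).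
Qed.

(* With mu_j = v_k - v_j - (k - j) and lam_i = v_k - (k - i) + u_i + 1, the
   entries of S_{lam/mu} are h_{u_i + v_j + 1}, as v is strictly increasing. *)
Definition inner_diagram k (v : 'I_k.+1 -> nat) : seq nat :=
  mkseq (fun j => v ord_max - v (inord j) - (k - j))%N k.+1.

Definition outer_diagram k (u v : 'I_k.+1 -> nat) : seq nat :=
  mkseq (fun i => (v ord_max - (k - i) + u (inord i)).+1)%N k.+1.

Section Diagram.

Variables (k : nat) (u v : 'I_k.+1 -> nat).
Hypothesis v_incr : forall a b : 'I_k.+1, (a < b)%N -> (v a < v b)%N.

Lemma gap_ord_max (b : 'I_k.+1) : (v b + (k - b) <= v ord_max)%N.
Proof. exact: increasing_ord_gap v_incr b ord_max (leq_ord b). Qed.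

Lemma nth_inner_diagram (j : 'I_k.+1) :
  nth 0%N (inner_diagram v) j = (v ord_max - v j - (k - j))%N.
Proof. by rewrite nth_mkseq // inord_val. Qed.

Lemma nth_outer_diagram (i : 'I_k.+1) :
  nth 0%N (outer_diagram u v) i = (v ord_max - (k - i) + u i).+1.
Proof. by rewrite nth_mkseq // inord_val. Qed.

Lemma inner_ok_diagram : inner_ok k.+1 (outer_diagram u v) (inner_diagram v).
Proof.
apply/and4P; split; first by rewrite size_mkseq.
- apply: (sorted_geq_nth_ord (size_mkseq _ _) nth_inner_diagram) => a b /= ba.
  by have := gap_ord_max b; have := @v_incr a b; rewrite ba ltnSn; lia.
- by apply/forallP => i; rewrite nth_inner_diagram nth_outer_diagram; lia.
- by have := nth_inner_diagram ord_max => /= ->; rewrite subnn.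
Qed.

Hypothesis u_decr : forall a b : 'I_k.+1, (a < b)%N -> (u b < u a)%N.

Lemma partk_outer_diagram : partk k.+1 (outer_diagram u v).
Proof.
apply/and3P; split; first by rewrite size_mkseq.
  apply: (sorted_geq_nth_ord (size_mkseq _ _) nth_outer_diagram) => a b /= ba.
  by have := gap_ord_max a; have := @u_decr a b; rewrite ba ltnSn; lia.
by apply/allP => x /mapP [i _ ->].
Qed.

End Diagram.

Section Hankel.

Variable n : nat.

Definition hankel k (R S : 'I_k -> nat) : {mpoly int[n]} :=
  \det (\matrix_(i, j) hz n ((R i + S j).+1)%:Z).

Lemma eq_hankel k (R R' S S' : 'I_k -> nat) :
  R =1 R' -> S =1 S' -> hankel R S = hankel R' S'.
Proof. by move=> eqR eqS; congr (\det _); apply/matrixP => i j; rewrite !mxE eqR eqS. Qed.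

Lemma hankelC k (R S : 'I_k -> nat) : hankel R S = hankel S R.
Proof. by rewrite /hankel -det_tr; congr (\det _); apply/matrixP => i j; rewrite !mxE addnC. Qed.

Lemma sum_hankel_raise k (R S : 'I_k -> nat) m :
  \sum_(I : {set 'I_k} | #|I| == m) hankel (fun i => R i + (i \in I))%N S
  = \sum_(J : {set 'I_k} | #|J| == m) hankel R (fun j => S j + (j \in J))%N.
Proof.
have := sum_det_mix_rows_cols (\matrix_(i, j) hz n ((R i + S j).+1)%:Z)
  (\matrix_(i, j) hz n ((R i + S j).+2)%:Z) m.
congr (_ = _); apply: eq_bigr => I _; congr (\det _); apply/matrixP => i j; rewrite !mxE.
  by case: (i \in I); rewrite ?addn0 ?addn1 ?addSn.
by case: (j \in I); rewrite ?addn0 ?addn1 ?addnS.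
Qed.

Lemma hankel_perm k (R S : 'I_k -> nat) (s t : 'S_k) :
  hankel (R \o s) (S \o t) = (-1) ^+ s * (-1) ^+ t * hankel R S.
Proof.
have -> : hankel (R \o s) (S \o t)
          = \det (row_perm s (col_perm t (\matrix_(i, j) hz n ((R i + S j).+1)%:Z))).
  by congr (\det _); apply/matrixP => i j; rewrite !mxE.
by rewrite row_permE col_permE !det_mulmx !det_perm odd_permV mulrA mulrAC.
Qed.

Lemma hankel_eq0 k (R S : 'I_k -> nat) : ~~ injectiveb R -> hankel R S = 0.
Proof.
case/injectivePn => i [j neq_ij eqR].
by apply: (determinant_alternate neq_ij) => l; rewrite !mxE eqR.
Qed.

Lemma Amat_minorE c k (r : 'I_k -> 'I_(n - c).+1) (s : 'I_k -> 'I_c) :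
  \det (\matrix_(i, j) Amat n c (r i) (s j)) = hankel (fun i => n - c - r i)%N s.
Proof.
congr (\det _); apply/matrixP => i j; rewrite !mxE; congr (hz n _).
by have := ltn_ord (r i); lia.
Qed.

Inductive hspan k (A B : nat) : {mpoly int[n]} -> Prop :=
| hspan0 : hspan k A B 0
| hspan_cons (z : int) (R S : 'I_k -> nat) p :
    (forall i, R i <= A)%N -> (forall j, S j <= B)%N ->
    hspan k A B p -> hspan k A B (z%:~R * hankel R S + p).

Lemma hspanD k A B p q : hspan k A B p -> hspan k A B q -> hspan k A B (p + q).
Proof.
move=> + span_q; elim=> [|z R S p' le_RA le_SB _ IH]; first by rewrite add0r.
by rewrite -addrA; apply: hspan_cons.
Qed.

Lemma hspanZ k A B (z : int) p : hspan k A B p -> hspan k A B (z%:~R * p).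
Proof.
elim=> [|z' R S p' le_RA le_SB _ IH]; first by rewrite mulr0; apply: hspan0.
by rewrite mulrDr mulrA -intrM; apply: hspan_cons.
Qed.

Lemma hspanN k A B p : hspan k A B p -> hspan k A B (- p).
Proof. by move/(hspanZ (-1)); rewrite mulN1r. Qed.

Lemma hspan_hankel k A B (R S : 'I_k -> nat) :
  (forall i, R i <= A)%N -> (forall j, S j <= B)%N -> hspan k A B (hankel R S).
Proof.
move=> le_RA le_SB; rewrite -[hankel R S]addr0 -[hankel R S]mul1r -[1]/(1%:~R).
exact: hspan_cons (hspan0 _ _ _).
Qed.

Lemma hspan_sum k A B (I : finType) (P : pred I) (F : I -> {mpoly int[n]}) :
  (forall i, P i -> hspan k A B (F i)) -> hspan k A B (\sum_(i | P i) F i).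
Proof.
move=> span_F; elim/big_rec: _ => [|i p Pi span_p]; first exact: hspan0.
by apply: hspanD => //; apply: span_F.
Qed.

Lemma hspan_raise_hankel k A B (R S : 'I_k -> nat) : (k <= A.+1)%N ->
  (forall i, R i <= A.+1)%N -> (forall j, S j <= B)%N -> hspan k A B.+1 (hankel R S).
Proof.
move=> le_kA; have [N] := ubnP (\sum_i R i ^ 2)%N; elim: N R => // N IH R.
rewrite ltnS => le_RN le_RA le_SB.
have [/forallP le_RA' | ] := boolP [forall i, R i <= A]%N.
  by apply: hspan_hankel => // j; apply: leqW.
rewrite negb_forall => /existsP [i0]; rewrite -ltnNge => lt_ARi0.
have Ri0 : R i0 = A.+1 by apply/eqP; rewrite eqn_leq le_RA.
have [T le_TA missT] := exists_missed_value le_kA Ri0.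
pose b := [set i | T < R i]%N.
pose R' i := (R i - (i \in b))%N.
have le_R'A i : (R' i <= A)%N.
  by rewrite /R' inE; have := le_RA i; have := missT i; case: ltnP => /=; lia.
have := sum_hankel_raise R' S #|b|; rewrite (bigD1 b) //=.
have -> : hankel (fun i => R' i + (i \in b))%N S = hankel R S.
  by apply: eq_hankel => // i; rewrite /R' inE; case: ltnP => /=; lia.
move/(canRL (addrK _)) => ->; apply: hspanD.
  apply: hspan_sum => J _; apply: hspan_hankel => // j.
  by have := le_SB j; case: (j \in J) => /=; lia.
apply/hspanN/hspan_sum => I /andP [/eqP cardI neq_Ib]; apply: IH => // [|i].
  exact: leq_trans (sum_sq_lower_raise_lt missT (erefl b) cardI neq_Ib) le_RN.
by have := le_R'A i; case: (i \in I) => /=; lia.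
Qed.

Lemma hspan_raise k A B p : (k <= A.+1)%N -> hspan k A.+1 B p -> hspan k A B.+1 p.
Proof.
move=> le_kA; elim=> [|z R S q le_RA le_SB _ IH]; first exact: hspan0.
by apply: hspanD => //; apply/hspanZ/hspan_raise_hankel.
Qed.

Lemma hspan_raise_iter k A B d p :
  (k <= A.+1)%N -> hspan k (A + d) B p -> hspan k A (B + d) p.
Proof.
elim: d A B => [|d IH] A B le_kA; first by rewrite !addn0.
rewrite -addSnnS addnS => /IH span_p; apply: hspan_raise => //.
by apply: span_p; apply: leqW.
Qed.

Lemma skewS_diagram k (u v : 'I_k.+1 -> nat) :
  (forall a b : 'I_k.+1, (a < b)%N -> (v a < v b)%N) ->
  skewS n k.+1 (outer_diagram u v) (inner_diagram v) = hankel u v.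
Proof.
move=> v_incr; congr (\det _); apply/matrixP => i j; rewrite !mxE.
rewrite nth_outer_diagram nth_inner_diagram; congr (hz n _).
have := ltn_ord i; have := ltn_ord j.
by have := gap_ord_max v_incr i; have := gap_ord_max v_incr j; lia.
Qed.

Lemma hankel_legal c k (u v : 'I_k -> nat) : (0 < k)%N ->
  (forall a b : 'I_k, (a < b)%N -> (u b < u a)%N) ->
  (forall a b : 'I_k, (a < b)%N -> (v a < v b)%N) ->
  (forall i, u i <= n - c)%N -> (forall j, v j < c)%N ->
  exists lam mu, legal n k c lam mu /\ skewS n k lam mu = hankel u v.
Proof.
case: k u v => // k u v _ u_decr v_incr le_u lt_v.
exists (outer_diagram u v), (inner_diagram v); split; last exact: skewS_diagram.
split; [exact: partk_outer_diagram | exact: inner_ok_diagram |].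
have lt_row i : (n - c - u i < (n - c).+1)%N by rewrite ltnS leq_subr.
exists (fun i => Ordinal (lt_row i)), (fun j => Ordinal (lt_v j)); split => //=.
  by move=> a b /u_decr; have := le_u a; have := le_u b; lia.
rewrite skewS_diagram // Amat_minorE; apply: eq_hankel => // i /=.
by have := le_u i; lia.
Qed.

Lemma hspan_legal c k p : (0 < k)%N -> (0 < c)%N -> hspan k (n - c) c.-1 p ->
  exists s : seq (int * (seq nat * seq nat)),
    (forall t, t \in s -> legal n k c t.2.1 t.2.2) /\
    p = \sum_(t <- s) t.1%:~R * skewS n k t.2.1 t.2.2.
Proof.
move=> k_gt0 c_gt0; elim=> [|z R S q le_R le_S _ [s [legal_s ->]]].
  by exists [::]; rewrite big_nil.
have [/injectiveP inj_R | /hankel_eq0 ->] := boolP (injectiveb R); last first.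
  by exists s; rewrite mulr0 add0r.
have [/injectiveP inj_S | /(hankel_eq0 R) S0] := boolP (injectiveb S); last first.
  by exists s; rewrite hankelC S0 mulr0 add0r.
have inj_rows : injective (fun i => n - c - R i)%N.
  by move=> i j eq_ij; apply: inj_R; have := le_R i; have := le_R j; lia.
have [sr sr_incr] := sorting_perm inj_rows.
have [sc sc_incr] := sorting_perm inj_S.
have [lam [mu [legal_lm skewE]]] :
    exists lam mu, legal n k c lam mu /\ skewS n k lam mu = hankel (R \o sr) (S \o sc).
  apply: hankel_legal => //.
  - by move=> a b /sr_incr /=; have := le_R (sr a); have := le_R (sr b); lia.
  - by move=> i; apply: le_R.
  - by move=> j /=; have := le_S (sc j); lia.
exists ((z * ((-1) ^+ sr * (-1) ^+ sc), (lam, mu)) :: s); split.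
  by move=> t; rewrite inE => /predU1P [-> | /legal_s].
rewrite big_cons /= skewE hankel_perm !intrM !rmorph_sign.
by rewrite -!mulrA (mulrCA ((-1) ^+ sc)) !signrMK.
Qed.

End Hankel.

Theorem lemma3 (n k c : nat) :
  (0 < n)%N -> (1 <= k)%N -> (k <= c)%N -> (c.*2 <= n)%N ->
  forall nu : seq nat, legal n k k nu (nseq k 0%N) ->
  exists s : seq (int * (seq nat * seq nat)),
    (forall t, t \in s -> legal n k c t.2.1 t.2.2) /\
    skewS n k nu (nseq k 0%N) = \sum_(t <- s) t.1%:~R * skewS n k t.2.1 t.2.2.
Proof.
move=> _ k_gt0 le_kc le_2c_n nu [_ _ [r [s [_ _ ->]]]].
rewrite Amat_minorE; apply: hspan_legal => //; first exact: leq_trans le_kc.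
have -> : c.-1 = (k.-1 + (c - k))%N by lia.
apply: hspan_raise_iter; first by lia.
have -> : (n - c + (c - k) = n - k)%N by lia.
by apply: hspan_hankel => [i | j]; [have := ltn_ord (r i) | have := ltn_ord (s j)]; lia.
Qed.
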